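(* If a judgment aggregation rule is strategyproof (with respect to Hamming-distance preferences and any extension of them to sets of judgments satisfying requirements (R1) and (R2)), then it satisfies neither the maximin property nor the equity property.
   Context: An agenda is a finite nonempty list $\Phi=(\phi_1,\dots,\phi_m)$ of propositional formulas; a judgment is $J\in\{0,1\}^m$, $J(\phi_k)$ its $k$-th entry. $\mathcal{J}(\Phi)\subseteq\{0,1\}^m$ is the nonempty set of admissible judgments; the agenda may be chosen so that $\mathcal{J}(\Phi)$ is any prescribed nonempty set of vectors. For a finite set of agents $N$, $|N|=n\ge2$, a profile is $\mathbf{P}=(J_1,\dots,J_n)\in\mathcal{J}(\Phi)^n$; $\mathbf{P}'=_{-i}\mathbf{P}$ means $\mathbf{P}'$ and $\mathbf{P}$ differ at most in agent $i$'s judgment. A rule $F$ maps every profile (every finite group, every agenda) to a nonempty $F(\mathbf{P})\subseteq\mathcal{J}(\Phi)$. Hamming distance $H(J,J')=\sum_k|J(\phi_k)-J'(\phi_k)|$. Preferences: agent $i$ with truthful judgment $J_i$ has $J\succeq_i J'$ iff $H(J_i,J)\le H(J_i,J')$ (strict part $\succ_i$). A preference $\mathrel{\mathring{\succeq}}_i$ over subsets of $\mathcal{J}(\Phi)$, with strict part $\mathrel{\mathring{\succ}}_i$, must satisfy (R1) $J\succeq_i J'$ iff $\{J\}\mathrel{\mathring{\succeq}}_i\{J'\}$; (R2) $X\mathrel{\mathring{\succ}}_i Y$ implies there exist $J\in X$, $J'\in Y$ with $J\succ_i J'$ and $\{J,J'\}\not\subseteq X\cap Y$. $F$ is manipulable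 by agent $i$ in $\mathbf{P}$ if there is $\mathbf{P}'=_{-i}\mathbf{P}$ with $F(\mathbf{P}')\mathrel{\mathring{\succ}}_i F(\mathbf{P})$; $F$ is strategyproof if it is not manipulable by any agent in any profile. Maximin property: for all $\mathbf{P}$ and $J\in F(\mathbf{P})$ there are no $J'\in\mathcal{J}(\Phi)$, $j\in N$ with $H(J_i,J')<H(J_j,J)$ for all $i\in N$. Equity property: for all $\mathbf{P}$ and $J\in F(\mathbf{P})$ there are no $J'\in\mathcal{J}(\Phi)$, $i',j'\in N$ with $|H(J_i,J')-H(J_j,J')|<|H(J_{i'},J)-H(J_{j'},J)|$ for all $i,j\in N$. *)

From mathcomp Require Import all_boot.
Set Implicit Arguments.
Unset Strict Implicit.
Unset Printing Implicit Defensive.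

Inductive form : Type :=
  | Var of nat
  | Neg of form
  | And of form & form
  | Or of form & form.

Fixpoint eval (v : nat -> bool) (f : form) : bool :=
  match f with
  | Var x => v x
  | Neg g => ~~ eval v g
  | And g h => eval v g && eval v h
  | Or g h => eval v g || eval v h
  end.

(* An agenda of length m is an m-tuple of formulas; a judgment is a 0/1
   vector of length m (true = 1). *)
Definition judg (m : nat) := {ffun 'I_m -> bool}.

Definition admissible (m : nat) (Phi : m.-tuple form) (J : judg m) : Prop :=
  exists v : nat -> bool, forall k : 'I_m, J k = eval v (tnth Phi k).

Definition profile (m n : nat) := {ffun 'I_n -> judg m}.

Definition adm_profile (m n : nat) (Phi : m.-tuple form) (P : profile m n) : Prop :=
  forall i : 'I_n, admissible Phi (P i).

Definition hamming (m : nat) (J J' : judg m) : nat :=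
  \sum_(k < m) (J k != J' k).

Definition absdiff (a b : nat) : nat := (a - b) + (b - a).

Definition rule := forall (m : nat) (Phi : m.-tuple form) (n : nat),
  profile m n -> {set judg m}.

Definition is_rule (F : rule) : Prop :=
  forall m (Phi : m.-tuple form) n (P : profile m n),
    0 < m -> 1 < n -> adm_profile Phi P ->
    F m Phi n P != set0 /\ (forall J, J \in F m Phi n P -> admissible Phi J).

(* A family of set preferences: for agenda Phi, group 'I_n, agent i with
   truthful judgment Ji, a relation "X is weakly preferred to Y". *)
Definition set_ext := forall (m : nat) (Phi : m.-tuple form) (n : nat)
  (i : 'I_n) (Ji : judg m), rel {set judg m}.

Definition strict (T : Type) (r : rel T) (x y : T) : bool := r x y && ~~ r y x.

Definition subset_adm (m : nat) (Phi : m.-tuple form) (X : {set judg m}) : Prop :=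
  X != set0 /\ (forall J, J \in X -> admissible Phi J).

Definition valid_ext (E : set_ext) : Prop :=
  forall m (Phi : m.-tuple form) n (i : 'I_n) (Ji : judg m),
    0 < m -> 1 < n -> admissible Phi Ji ->
    (forall J J', admissible Phi J -> admissible Phi J' ->
       (hamming Ji J <= hamming Ji J') <-> E m Phi n i Ji [set J] [set J'])
    /\
    (forall X Y, subset_adm Phi X -> subset_adm Phi Y ->
       strict (E m Phi n i Ji) X Y ->
       exists J, exists J', [/\ J \in X, J' \in Y,
         hamming Ji J < hamming Ji J' &
         ~~ ((J \in X :&: Y) && (J' \in X :&: Y))]).

Definition strategyproof (F : rule) (E : set_ext) : Prop :=
  forall m (Phi : m.-tuple form) n (P P' : profile m n) (i : 'I_n),
    0 < m -> 1 < n -> adm_profile Phi P -> adm_profile Phi P' ->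
    (forall j, j != i -> P' j = P j) ->
    ~ strict (E m Phi n i (P i)) (F m Phi n P') (F m Phi n P).

Definition maximin (F : rule) : Prop :=
  forall m (Phi : m.-tuple form) n (P : profile m n) (J : judg m),
    0 < m -> 1 < n -> adm_profile Phi P -> J \in F m Phi n P ->
    ~ exists J' : judg m, exists j : 'I_n,
        admissible Phi J' /\ forall i : 'I_n, hamming (P i) J' < hamming (P j) J.

Definition equity (F : rule) : Prop :=
  forall m (Phi : m.-tuple form) n (P : profile m n) (J : judg m),
    0 < m -> 1 < n -> adm_profile Phi P -> J \in F m Phi n P ->
    ~ exists J' : judg m, exists i' : 'I_n, exists j' : 'I_n,
        admissible Phi J' /\ forall i j : 'I_n,
          absdiff (hamming (P i) J') (hamming (P j) J')
          < absdiff (hamming (P i') J) (hamming (P j') J).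

From mathcomp Require Import all_boot.

(* Both the maximin property and the equity property say that a rule only
   selects judgments minimising a numerical score of the profile:
   - maximin: the largest Hamming distance from an agent to the outcome,
   - equity:  the largest difference between two agents' distances to it.
   The proof is a single counterexample which works for any such score.
   Take four issues p/\q, p/\q, p/\~q, q; its admissible judgments are the
   four vectors a = 0000, b = 0001, c = 0010, d = 1101 given by the
   valuations of p and q.  In the two-agent profile (b, c) both scores are
   uniquely minimised by a, and in (d, c) by b.  A rule minimising the score
   therefore returns {a} at (b, c) and {b} at (d, c); so the first agent,
   whose truthful judgment is b, gains by reporting d instead, and by (R1)
   the singleton {b} is strictly preferred to {a}: the rule is manipulable.
   Only requirement (R1) of the set extension is used. *)

Section Manipulation.

Variables (F : rule) (E : set_ext).
Variables (m : nat) (Phi : m.-tuple form) (n : nat).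
Hypotheses (m_gt0 : 0 < m) (n_gt1 : 1 < n).

Lemma strict_singleton_pref (i : 'I_n) (Ji J J' : judg m) :
  valid_ext E -> admissible Phi Ji -> admissible Phi J -> admissible Phi J' ->
  hamming Ji J < hamming Ji J' -> strict (E m Phi n i Ji) [set J] [set J'].
Proof.
move=> HE adm_Ji adm_J adm_J' closer.
have [R1 _] := HE m Phi n i Ji m_gt0 n_gt1 adm_Ji.
apply/andP; split; first by apply/R1 => //; exact: ltnW.
by apply/negP => /(R1 _ _ adm_J' adm_J); rewrite leqNgt closer.
Qed.

Lemma singleton_manipulation (P P' : profile m n) (i : 'I_n) (J J' : judg m) :
  valid_ext E -> strategyproof F E ->
  adm_profile Phi P -> adm_profile Phi P' -> (forall j, j != i -> P' j = P j) ->
  admissible Phi J -> admissible Phi J' ->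
  F m Phi n P = [set J] -> F m Phi n P' = [set J'] ->
  hamming (P i) J' < hamming (P i) J -> False.
Proof.
move=> HE HF adm_P adm_P' same_others adm_J adm_J' FP FP' closer.
apply: (HF m Phi n P P' i m_gt0 n_gt1 adm_P adm_P' same_others).
by rewrite FP FP'; apply: strict_singleton_pref.
Qed.

End Manipulation.

Definition score := forall m n, profile m n -> judg m -> nat.

Definition minimizes (F : rule) (c : score) : Prop :=
  forall m (Phi : m.-tuple form) n (P : profile m n) (J J' : judg m),
    0 < m -> 1 < n -> adm_profile Phi P -> J \in F m Phi n P ->
    admissible Phi J' -> c m n P J <= c m n P J'.

Lemma unique_minimizer (F : rule) (c : score) m (Phi : m.-tuple form) n
    (P : profile m n) (w : judg m) :
  is_rule F -> minimizes F c -> 0 < m -> 1 < n -> adm_profile Phi P ->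
  admissible Phi w ->
  (forall J, admissible Phi J -> J != w -> c m n P w < c m n P J) ->
  F m Phi n P = [set w].
Proof.
move=> HF Hc m_gt0 n_gt1 adm_P adm_w w_best.
have [/set0Pn [J0 FJ0] adm_F] := HF m Phi n P m_gt0 n_gt1 adm_P.
have only_w J : J \in F m Phi n P -> J = w.
  move=> FJ; apply/eqP; apply: contraLR (Hc _ _ _ _ _ _ m_gt0 n_gt1 adm_P FJ adm_w).
  by rewrite -ltnNge; apply: w_best; exact: adm_F.
apply/setP => J; rewrite in_set1; apply/idP/eqP => [/only_w // | ->].
by rewrite -(only_w J0 FJ0).
Qed.

Lemma bigmax_lt_witness (I : finType) (a b : I -> nat) :
  \max_i a i < \max_i b i -> exists j, forall i, a i < b j.
Proof.
move=> lt_ab; have [j0 _ | I_empty] := pickP (@predT I).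
  exists [arg max_(j > j0) b j] => i.
  by rewrite -bigmax_eq_arg //; apply: leq_ltn_trans lt_ab; exact: leq_bigmax.
by rewrite [X in _ < X]big_pred0 in lt_ab.
Qed.

Lemma absdiffC (x y : nat) : absdiff x y = absdiff y x.
Proof. by rewrite /absdiff addnC. Qed.

Lemma absdiffnn (x : nat) : absdiff x x = 0.
Proof. by rewrite /absdiff subnn. Qed.

Definition maxdist : score := fun m n P J => \max_(i < n) hamming (P i) J.

Definition spread : score := fun m n P J =>
  \max_(p : 'I_n * 'I_n) absdiff (hamming (P p.1) J) (hamming (P p.2) J).

Lemma maximin_minimizes (F : rule) : maximin F -> minimizes F maxdist.
Proof.
move=> HF m Phi n P J J' m_gt0 n_gt1 adm_P FJ adm_J'.
rewrite leqNgt; apply/negP => /bigmax_lt_witness [j beaten].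
by apply: (HF m Phi n P J m_gt0 n_gt1 adm_P FJ); exists J', j.
Qed.

Lemma equity_minimizes (F : rule) : equity F -> minimizes F spread.
Proof.
move=> HF m Phi n P J J' m_gt0 n_gt1 adm_P FJ adm_J'.
rewrite leqNgt; apply/negP => /bigmax_lt_witness [[i' j'] beaten].
apply: (HF m Phi n P J m_gt0 n_gt1 adm_P FJ); exists J', i', j'.
by split=> // i j; exact: (beaten (i, j)).
Qed.

Definition pair_profile {m} (J0 J1 : judg m) : profile m 2 :=
  [ffun i => if i == ord0 then J0 else J1].

Lemma ord2_cases (i : 'I_2) : i = ord0 \/ i = ord_max.
Proof. by case: i => [[|[|k]] Hk] //; [left | right]; apply: val_inj. Qed.

Lemma adm_pair_profile m (Phi : m.-tuple form) (J0 J1 : judg m) :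
  admissible Phi J0 -> admissible Phi J1 -> adm_profile Phi (pair_profile J0 J1).
Proof. by move=> adm0 adm1 i; rewrite ffunE; case: (i == ord0). Qed.

Lemma maxdist_pair m (J0 J1 J : judg m) :
  maxdist m 2 (pair_profile J0 J1) J = maxn (hamming J0 J) (hamming J1 J).
Proof. by rewrite /maxdist !big_ord_recr big_ord0 /= !ffunE max0n. Qed.

Lemma spread_pair m (J0 J1 J : judg m) :
  spread m 2 (pair_profile J0 J1) J = absdiff (hamming J0 J) (hamming J1 J).
Proof.
set d := fun i : 'I_2 => hamming (pair_profile J0 J1 i) J.
have [d0 d1] : d ord0 = hamming J0 J /\ d ord_max = hamming J1 J.
  by rewrite /d !ffunE.
apply/eqP; rewrite eqn_leq; apply/andP; split.
  apply/bigmax_leqP => [[i j]] _ /=; rewrite -/(d i) -/(d j).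
  by case: (ord2_cases i) (ord2_cases j) => -> [] ->;
    rewrite ?absdiffnn // d0 d1 // absdiffC.
by rewrite -d0 -d1; exact: (leq_bigmax (ord0, ord_max)).
Qed.

Definition Phi4 : 4.-tuple form :=
  [tuple And (Var 0) (Var 1); And (Var 0) (Var 1); And (Var 0) (Neg (Var 1)); Var 1].

Definition judg_of (p q : bool) : judg 4 :=
  [ffun k => eval (fun x => if x == 0 then p else q) (tnth Phi4 k)].

Definition ja := judg_of false false.
Definition jb := judg_of false true.
Definition jc := judg_of true false.
Definition jd := judg_of true true.

Lemma judg_of_admissible (p q : bool) : admissible Phi4 (judg_of p q).
Proof. by exists (fun x => if x == 0 then p else q) => k; rewrite ffunE. Qed.

(* Only p and q occur in the agenda, so a, b, c, d are all of J(Phi4). *)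
Lemma admissible_cases (J : judg 4) :
  admissible Phi4 J -> J \in [:: ja; jb; jc; jd].
Proof.
case=> v HJ; have -> : J = judg_of (v 0) (v 1).
  by apply/ffunP => k; rewrite HJ ffunE; case: k => [[|[|[|[|k]]]] Hk].
by rewrite !inE; case: (v 0); case: (v 1); rewrite eqxx ?orbT.
Qed.

Ltac hamming_eval :=
  rewrite /hamming !big_ord_recr !big_ord0 /= !ffunE !(tnth_nth (Var 0)) /=.

Definition Pbc : profile 4 2 := pair_profile jb jc.
Definition Pdc : profile 4 2 := pair_profile jd jc.

Lemma minimizer_manipulable (F : rule) (E : set_ext) (c : score) :
  is_rule F -> valid_ext E -> strategyproof F E -> minimizes F c ->
  [&& c 4 2 Pbc ja < c 4 2 Pbc jb, c 4 2 Pbc ja < c 4 2 Pbc jc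
    & c 4 2 Pbc ja < c 4 2 Pbc jd] ->
  [&& c 4 2 Pdc jb < c 4 2 Pdc ja, c 4 2 Pdc jb < c 4 2 Pdc jc
    & c 4 2 Pdc jb < c 4 2 Pdc jd] ->
  False.
Proof.
move=> HF HE Hsp Hc /and3P[ab ac ad] /and3P[ba bc bd].
have adm_Pbc : adm_profile Phi4 Pbc by apply: adm_pair_profile; exact: judg_of_admissible.
have adm_Pdc : adm_profile Phi4 Pdc by apply: adm_pair_profile; exact: judg_of_admissible.
have F_Pbc : F 4 Phi4 2 Pbc = [set ja].
  apply: (unique_minimizer F c) => //; first exact: judg_of_admissible.
  by move=> J /admissible_cases; rewrite !inE => /or4P[]/eqP->; rewrite ?eqxx //= => _.
have F_Pdc : F 4 Phi4 2 Pdc = [set jb].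
  apply: (unique_minimizer F c) => //; first exact: judg_of_admissible.
  by move=> J /admissible_cases; rewrite !inE => /or4P[]/eqP->; rewrite ?eqxx //= => _.
have only_agent0 (j : 'I_2) : j != ord0 -> Pdc j = Pbc j.
  by case: (ord2_cases j) => ->; rewrite ?eqxx // => _; rewrite !ffunE.
apply: (@singleton_manipulation F E 4 Phi4 2 isT isT Pbc Pdc ord0 ja jb HE Hsp
         adm_Pbc adm_Pdc only_agent0 _ _ F_Pbc F_Pdc).
- exact: judg_of_admissible.
- exact: judg_of_admissible.
- by rewrite ffunE; hamming_eval.
Qed.

Theorem proposition4 (F : rule) (E : set_ext) :
  is_rule F -> valid_ext E -> strategyproof F E ->
  ~ maximin F /\ ~ equity F.
Proof.
move=> HF HE Hsp; split.
- move=> /maximin_minimizes min_maxdist.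
  apply: (minimizer_manipulable _ _ _ HF HE Hsp min_maxdist);
    by rewrite /Pbc /Pdc !maxdist_pair; hamming_eval.
- move=> /equity_minimizes min_spread.
  apply: (minimizer_manipulable _ _ _ HF HE Hsp min_spread);
    by rewrite /Pbc /Pdc !spread_pair; hamming_eval.
Qed.
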